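(* Let $k\ge1$, let $R_1,\dots,R_k\in\mathcal R$, and let $n_1,\dots,n_k\in\mathbb N$ with $n_k=\max(n_1,\dots,n_k)$. Put $A=\pi_{n_1}^{-1}(R_1)\cap\dots\cap\pi_{n_k}^{-1}(R_k)\subset\widehat P$. Then $A=\pi_{n_k}^{-1}(B)$ for some simple set $B\subset P$.
   Context: Let $I=[-1,1]$ and $J=(1,2]$. For $t\in J$ let $f_t\colon I\to I$ be the core tent map $f_t(x)=\min\big(t(x-1)+3,\ t(1-x)-1\big)$. Let $P=I\times J$ and $F\colon P\to P$, $F(x,t)=(f_t(x),t)$. For a compact metric space $X$ and continuous surjection $g\colon X\to X$, the inverse limit is $\varprojlim(X,g)=\{\mathbf x=\langle x_0,x_1,\dots\rangle\in X^{\mathbb N}: g(x_{n+1})=x_n\ \forall n\}$ with the product topology (metric $d(\mathbf x,\mathbf y)=\sum_n d(x_n,y_n)/2^n$), and $\pi_n(\mathbf x)=x_n$. Let $\widehat P=\varprojlim(P,F)$ with projections $\pi_n\colon\widehat P\to P$. For $X\subset P$ write $X^{(t)}=X\cap(I\times\{t\})$. A tilted rectangle is a subset of $\mathbb R^2$ obtained by rotating an open (possibly empty) rectangle $(a_1,a_2)\times(b_1,b_2)$ by $\pi/4$; $\mathcal R$ is the set of tilted rectangles contained in $P$. A subset $B\subset P$ is simple if it is open in $P$ and $(\partial B)^{(t)}$ is finite for each $t\in J$. *)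

From Stdlib Require Import Reals Lra List.
Open Scope R_scope.

Definition pt := (R * R)%type.

Definition inI (x : R) : Prop := -1 <= x <= 1.
Definition inJ (t : R) : Prop := 1 < t <= 2.
Definition inP (p : pt) : Prop := inI (fst p) /\ inJ (snd p).

Definition tent (t x : R) : R := Rmin (t * (x - 1) + 3) (t * (1 - x) - 1).

Definition Fmap (p : pt) : pt := (tent (snd p) (fst p), snd p).

(* Points of the inverse limit  \hat P = lim_<- (P, F) : threads x with
   x_n in P and F(x_{n+1}) = x_n for all n. *)
Definition inPhat (xs : nat -> pt) : Prop :=
  forall n, inP (xs n) /\ Fmap (xs (S n)) = xs n.

Definition dist2 (p q : pt) : R :=
  sqrt ((fst p - fst q) ^ 2 + (snd p - snd q) ^ 2).

Definition rot4 (p : pt) : pt :=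
  (cos (PI / 4) * fst p - sin (PI / 4) * snd p,
   sin (PI / 4) * fst p + cos (PI / 4) * snd p).

Definition tilted_rect (S : pt -> Prop) : Prop :=
  exists a1 a2 b1 b2 : R,
    forall p, S p <-> exists u v, a1 < u < a2 /\ b1 < v < b2 /\ p = rot4 (u, v).

Definition in_calR (S : pt -> Prop) : Prop :=
  tilted_rect S /\ (forall p, S p -> inP p).

Definition openP (B : pt -> Prop) : Prop :=
  (forall p, B p -> inP p) /\
  forall p, B p -> exists eps, eps > 0 /\
    forall q, inP q -> dist2 p q < eps -> B q.

Definition closureP (B : pt -> Prop) (p : pt) : Prop :=
  inP p /\ forall eps, eps > 0 -> exists q, B q /\ dist2 p q < eps.

Definition interiorP (B : pt -> Prop) (p : pt) : Prop :=
  B p /\ exists eps, eps > 0 /\ forall q, inP q -> dist2 p q < eps -> B q.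

Definition boundaryP (B : pt -> Prop) (p : pt) : Prop :=
  closureP B p /\ ~ interiorP B p.

Definition simple_set (B : pt -> Prop) : Prop :=
  openP B /\
  forall t, inJ t -> exists l : list R, forall x, boundaryP B (x, t) -> In x l.

(* The set is B = {p in P | F^(n_k - n_i)(p) in R_i for all i}, since a thread satisfies
   x_(n_i) = F^(n_k - n_i)(x_(n_k)).  In the diagonal coordinates x + t and t - x a tilted
   rectangle is an open box, and F^m is Lipschitz on P, so B is open.  A boundary point
   (x, t) of B lies outside B but in the closure of every constraint, so some F^(m_i)(x, t)
   lies on one of the four sides of the i-th box; as F preserves t and each point has at
   most two preimages under f_t, this leaves finitely many x on the slice. *)
From Stdlib Require Import Reals Lra Lia List Classical.
Open Scope R_scope.

Definition Fiter (m : nat) : pt -> pt := Nat.iter m Fmap.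

Lemma Fiter_snd m p : snd (Fiter m p) = snd p.
Proof. induction m as [|m IH]; simpl; auto. Qed.

Lemma tent_inI t x : inJ t -> inI x -> inI (tent t x).
Proof. unfold inJ, inI, tent, Rmin; intros; destruct (Rle_dec _ _); split; nra. Qed.

Lemma Fiter_inP m p : inP p -> inP (Fiter m p).
Proof.
  intros Hp; induction m as [|m [Hx Ht]]; simpl; auto.
  split; simpl; auto using tent_inI.
Qed.

Lemma inPhat_thread xs : inPhat xs -> forall d j, xs j = Fiter d (xs (j + d)%nat).
Proof.
  intros Hxs d; induction d as [|d IH]; intros j.
  - now rewrite Nat.add_0_r.
  - unfold Fiter; rewrite Nat.iter_succ_r.
    replace (j + S d)%nat with (S (j + d)) by lia.
    rewrite (proj2 (Hxs (j + d)%nat)); apply IH.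
Qed.

Lemma Rmin_diff_le a b a' b' D :
  Rabs (a - a') <= D -> Rabs (b - b') <= D -> Rabs (Rmin a b - Rmin a' b') <= D.
Proof. unfold Rmin; destruct (Rle_dec a b), (Rle_dec a' b'); split_Rabs; lra. Qed.

Lemma Fmap_lipschitz p q D : inP p -> inP q ->
  Rabs (fst p - fst q) <= D -> Rabs (snd p - snd q) <= D ->
  Rabs (fst (Fmap p) - fst (Fmap q)) <= 4 * D /\ Rabs (snd (Fmap p) - snd (Fmap q)) <= 4 * D.
Proof.
  destruct p as [x s], q as [y t]; unfold inP, inI, inJ, Fmap, tent; simpl.
  intros [Hx Hs] [Hy Ht] Hxy Hst.
  assert (- D <= x - y <= D) by (split_Rabs; lra).
  assert (- D <= s - t <= D) by (split_Rabs; lra).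
  split; [apply Rmin_diff_le; apply Rabs_le; split; nra | apply Rabs_le; split; nra].
Qed.

Lemma Fiter_lipschitz m p q D : inP p -> inP q ->
  Rabs (fst p - fst q) <= D -> Rabs (snd p - snd q) <= D ->
  Rabs (fst (Fiter m p) - fst (Fiter m q)) <= 4 ^ m * D /\
  Rabs (snd (Fiter m p) - snd (Fiter m q)) <= 4 ^ m * D.
Proof.
  intros Hp Hq Hx Ht; induction m as [|m IH]; simpl; [lra |].
  rewrite Rmult_assoc.
  destruct IH; apply Fmap_lipschitz; auto using Fiter_inP.
Qed.

Lemma dist2_fst p q : Rabs (fst p - fst q) <= dist2 p q.
Proof.
  unfold dist2; rewrite <- sqrt_Rsqr_abs; apply sqrt_le_1_alt; unfold Rsqr.
  pose proof (pow2_ge_0 (snd p - snd q)); lra.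
Qed.

Lemma dist2_snd p q : Rabs (snd p - snd q) <= dist2 p q.
Proof.
  unfold dist2; rewrite <- sqrt_Rsqr_abs; apply sqrt_le_1_alt; unfold Rsqr.
  pose proof (pow2_ge_0 (fst p - fst q)); lra.
Qed.

Definition lipschitzP (g : pt -> R) (K : R) : Prop :=
  forall p q, inP p -> inP q -> Rabs (g q - g p) <= K * dist2 p q.

Definition diag1 (r : pt) : R := fst r + snd r.
Definition diag2 (r : pt) : R := snd r - fst r.

Lemma diag_Fiter_lipschitz m :
  lipschitzP (fun p => diag1 (Fiter m p)) (2 * 4 ^ m) /\
  lipschitzP (fun p => diag2 (Fiter m p)) (2 * 4 ^ m).
Proof.
  split; intros p q Hp Hq;
    destruct (Fiter_lipschitz m p q _ Hp Hq (dist2_fst p q) (dist2_snd p q));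
    unfold diag1, diag2; apply Rabs_le; split_Rabs; lra.
Qed.

Definition continuousP (g : pt -> R) : Prop :=
  forall p e, inP p -> e > 0 ->
    exists d, d > 0 /\ forall q, inP q -> dist2 p q < d -> Rabs (g q - g p) < e.

Lemma lipschitzP_continuousP g K : 0 < K -> lipschitzP g K -> continuousP g.
Proof.
  intros HK Hg p e Hp He; exists (e / K); split; [apply Rdiv_lt_0_compat; lra |].
  intros q Hq Hd; apply (Rle_lt_trans _ _ _ (Hg p q Hp Hq)).
  apply (Rmult_lt_compat_l K) in Hd; [| lra].
  replace (K * (e / K)) with e in Hd by (field; lra); exact Hd.
Qed.

Lemma diag_Fiter_continuousP m :
  continuousP (fun p => diag1 (Fiter m p)) /\ continuousP (fun p => diag2 (Fiter m p)).
Proof.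
  assert (HK : 0 < 2 * 4 ^ m) by (pose proof (pow_lt 4 m); lra).
  destruct (diag_Fiter_lipschitz m).
  split; eapply lipschitzP_continuousP; eauto.
Qed.

Lemma continuousP_interval_nbhd g p a b : continuousP g -> inP p -> a < g p < b ->
  exists e, e > 0 /\ forall q, inP q -> dist2 p q < e -> a < g q < b.
Proof.
  intros Hg Hp Hab.
  destruct (Hg p (Rmin (g p - a) (b - g p)) Hp) as [e [He Hq]]; [apply Rmin_pos; lra |].
  exists e; split; auto; intros q Hq' Hd; specialize (Hq q Hq' Hd).
  pose proof (Rmin_l (g p - a) (b - g p)); pose proof (Rmin_r (g p - a) (b - g p)).
  split_Rabs; lra.
Qed.

Lemma continuousP_closure_interval g p a b : continuousP g ->
  closureP (fun q => inP q /\ a < g q < b) p -> a <= g p <= b.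
Proof.
  intros Hg [Hp Hcl].
  split; apply Rnot_lt_le; intros Hlt;
    [destruct (Hg p (a - g p) Hp) as [e [He Hnear]] |
     destruct (Hg p (g p - b) Hp) as [e [He Hnear]]]; try lra;
    destruct (Hcl e He) as [q [[Hq Hab] Hd]]; specialize (Hnear q Hq Hd); split_Rabs; lra.
Qed.

Lemma closureP_mono (S T : pt -> Prop) p :
  (forall q, S q -> T q) -> closureP S p -> closureP T p.
Proof.
  intros HST [Hp Hcl]; split; auto.
  intros e He; destruct (Hcl e He) as [q [Hq Hd]]; eauto.
Qed.

Lemma openP_interiorP B p : openP B -> B p -> interiorP B p.
Proof. intros [_ HB] Hp; split; auto. Qed.

Definition box (a b c d : R) (r : pt) : Prop :=
  a < diag1 r < b /\ c < diag2 r < d.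

Lemma tilted_rect_box S : tilted_rect S -> exists a b c d, forall r, S r <-> box a b c d r.
Proof.
  intros [a1 [a2 [b1 [b2 HS]]]].
  set (c := cos (PI / 4)).
  assert (Hs : sin (PI / 4) = c) by (unfold c; now rewrite sin_PI4, cos_PI4).
  assert (Hc : 0 < c).
  { unfold c; rewrite cos_PI4; apply Rdiv_lt_0_compat; [lra | apply sqrt_lt_R0; lra]. }
  exists (2 * c * a1), (2 * c * a2), (2 * c * b1), (2 * c * b2); intros [x y].
  rewrite HS; unfold box, diag1, diag2, rot4; rewrite Hs; fold c; simpl; split.
  - intros [u [v [Hu [Hv E]]]]; injection E as -> ->; split; split; nra.
  - intros [[H1 H2] [H3 H4]].
    exists ((x + y) / (2 * c)), ((y - x) / (2 * c)); split; [| split].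
    + split; apply (Rmult_lt_reg_r (2 * c)); try lra; field_simplify; lra.
    + split; apply (Rmult_lt_reg_r (2 * c)); try lra; field_simplify; lra.
    + f_equal; field; lra.
Qed.

Definition box_preimage (m : nat) (a b c d : R) (p : pt) : Prop :=
  inP p /\ box a b c d (Fiter m p).

Lemma box_preimage_nbhd m a b c d p : box_preimage m a b c d p ->
  exists e, e > 0 /\ forall q, inP q -> dist2 p q < e -> box_preimage m a b c d q.
Proof.
  intros [Hp [H1 H2]]; destruct (diag_Fiter_continuousP m) as [C1 C2].
  destruct (continuousP_interval_nbhd _ p a b C1 Hp H1) as [e1 [E1 F1]].
  destruct (continuousP_interval_nbhd _ p c d C2 Hp H2) as [e2 [E2 F2]].
  exists (Rmin e1 e2); split; [now apply Rmin_pos |].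
  intros q Hq Hd; pose proof (Rmin_l e1 e2); pose proof (Rmin_r e1 e2).
  split; [exact Hq | split; [apply F1 | apply F2]; auto; lra].
Qed.

(* Inverses of the two affine branches of f_t; spurious values are harmless for a
   finiteness bound. *)
Definition tent_preimages (t c : R) : list R := (1 + (c - 3) / t) :: (1 - (c + 1) / t) :: nil.

Definition iter_preimages (t : R) (m : nat) : list R -> list R :=
  Nat.iter m (flat_map (tent_preimages t)).

Lemma in_tent_preimages t x : 0 < t -> In x (tent_preimages t (tent t x)).
Proof.
  intros Ht; unfold tent_preimages, tent, Rmin; destruct (Rle_dec _ _);
    [left | right; left]; field; lra.
Qed.

Lemma in_iter_preimages m p l : 0 < snd p ->
  In (fst (Fiter m p)) l -> In (fst p) (iter_preimages (snd p) m l).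
Proof.
  revert p; induction m as [|m IH]; intros p Ht Hin; simpl; auto.
  unfold Fiter in Hin; rewrite Nat.iter_succ_r in Hin.
  apply IH in Hin; [| exact Ht].
  apply in_flat_map; exists (tent (snd p) (fst p)); split; [exact Hin |].
  now apply in_tent_preimages.
Qed.

Lemma box_preimage_boundary_slice m a b c d t : inJ t ->
  exists l, forall x, closureP (box_preimage m a b c d) (x, t) ->
    ~ box a b c d (Fiter m (x, t)) -> In x l.
Proof.
  intros Ht; exists (iter_preimages t m ((a - t) :: (b - t) :: (t - c) :: (t - d) :: nil)).
  intros x Hcl Hout; destruct (diag_Fiter_continuousP m) as [C1 C2].
  assert (H1 := continuousP_closure_interval _ _ a b C1
                  (closureP_mono _ _ _ (fun q Hq => conj (proj1 Hq) (proj1 (proj2 Hq))) Hcl)).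
  assert (H2 := continuousP_closure_interval _ _ c d C2
                  (closureP_mono _ _ _ (fun q Hq => conj (proj1 Hq) (proj2 (proj2 Hq))) Hcl)).
  change x with (fst (x, t)); change t with (snd (x, t)) at 1.
  apply in_iter_preimages; [simpl; unfold inJ in Ht; lra |].
  unfold box, diag1, diag2 in *; simpl in *; rewrite Fiter_snd in *; simpl in *.
  destruct (Req_dec (fst (Fiter m (x, t)) + t) a); [left; lra |].
  destruct (Req_dec (fst (Fiter m (x, t)) + t) b); [right; left; lra |].
  destruct (Req_dec (t - fst (Fiter m (x, t))) c); [right; right; left; lra |].
  destruct (Req_dec (t - fst (Fiter m (x, t))) d); [right; right; right; left; lra |].
  exfalso; apply Hout; lra.
Qed.

Lemma nbhd_forall_lt (k : nat) (C : nat -> pt -> Prop) p :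
  (forall i, (i < k)%nat -> exists e, e > 0 /\ forall q, inP q -> dist2 p q < e -> C i q) ->
  exists e, e > 0 /\ forall q, inP q -> dist2 p q < e -> forall i, (i < k)%nat -> C i q.
Proof.
  induction k as [|k IH]; intros H.
  - exists 1; split; [lra | intros; lia].
  - destruct IH as [e1 [E1 F1]]; [intros; apply H; lia |].
    destruct (H k (Nat.lt_succ_diag_r k)) as [e2 [E2 F2]].
    exists (Rmin e1 e2); split; [now apply Rmin_pos |].
    intros q Hq Hd i Hi; pose proof (Rmin_l e1 e2); pose proof (Rmin_r e1 e2).
    destruct (Nat.eq_dec i k) as [-> | Hik]; [apply F2 | apply F1]; auto; lra || lia.
Qed.

Lemma list_exists_lt (k : nat) (C : nat -> R -> Prop) :
  (forall i, (i < k)%nat -> exists l : list R, forall x, C i x -> In x l) ->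
  exists l : list R, forall x, (exists i, (i < k)%nat /\ C i x) -> In x l.
Proof.
  induction k as [|k IH]; intros H.
  - exists nil; intros x [i [Hi _]]; lia.
  - destruct IH as [l1 F1]; [intros; apply H; lia |].
    destruct (H k (Nat.lt_succ_diag_r k)) as [l2 F2].
    exists (l1 ++ l2); intros x [i [Hi Hx]]; apply in_or_app.
    destruct (Nat.eq_dec i k) as [-> | Hik]; [right | left; apply F1; exists i; split]; auto; lia.
Qed.

Section IteratePreimage.

Variables (k : nat) (S : nat -> pt -> Prop) (m : nat -> nat).
Hypothesis HS : forall i, (i < k)%nat -> tilted_rect (S i).

Definition iterate_preimage (p : pt) : Prop :=
  inP p /\ forall i, (i < k)%nat -> S i (Fiter (m i) p).

Lemma iterate_preimage_open : openP iterate_preimage.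
Proof.
  split; [now intros p [Hp _] |].
  intros p [Hp HB].
  destruct (nbhd_forall_lt k (fun i q => S i (Fiter (m i) q)) p) as [e [He Hnear]].
  - intros i Hi; destruct (tilted_rect_box _ (HS i Hi)) as [a [b [c [d Hbox]]]].
    destruct (box_preimage_nbhd (m i) a b c d p) as [e [He Hnear]].
    + split; [exact Hp | apply Hbox, HB, Hi].
    + exists e; split; [exact He |]; intros q Hq Hd; apply Hbox, Hnear; auto.
  - exists e; split; [exact He |]; intros q Hq Hd; split; auto.
Qed.

Lemma iterate_preimage_simple : simple_set iterate_preimage.
Proof.
  split; [exact iterate_preimage_open |]; intros t Ht.
  destruct (list_exists_lt k (fun i x => closureP iterate_preimage (x, t) /\
                                         ~ S i (Fiter (m i) (x, t)))) as [l Hl].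
  - intros i Hi; destruct (tilted_rect_box _ (HS i Hi)) as [a [b [c [d Hbox]]]].
    destruct (box_preimage_boundary_slice (m i) a b c d t Ht) as [l Hl].
    exists l; intros x [Hcl Hout]; apply Hl.
    + apply (closureP_mono _ _ _ (fun q '(conj Hq HB) => conj Hq (proj1 (Hbox _) (HB i Hi))) Hcl).
    + now rewrite <- Hbox.
  - exists l; intros x [Hcl Hint]; apply Hl.
    assert (Hout : ~ iterate_preimage (x, t))
      by (intros HB; apply Hint, openP_interiorP; [exact iterate_preimage_open | exact HB]).
    apply NNPP; intros Hno; apply Hout; split; [exact (proj1 Hcl) |].
    intros i Hi; apply NNPP; intros HSi; apply Hno; eauto.
Qed.

End IteratePreimage.

Theorem mainTheorem2 (k : nat) (Rs : nat -> pt -> Prop) (n : nat -> nat)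
  (hk : (1 <= k)%nat)
  (hR : forall i, (i < k)%nat -> in_calR (Rs i))
  (hmax : forall i, (i < k)%nat -> (n i <= n (k - 1)%nat)%nat) :
  exists B : pt -> Prop,
    simple_set B /\
    forall xs, inPhat xs ->
      ((forall i, (i < k)%nat -> Rs i (xs (n i))) <-> B (xs (n (k - 1)%nat))).
Proof.
  set (N := n (k - 1)%nat).
  exists (iterate_preimage k Rs (fun i => (N - n i)%nat)); split.
  - apply iterate_preimage_simple; intros i Hi; exact (proj1 (hR i Hi)).
  - intros xs Hxs.
    assert (Hthread : forall i, (i < k)%nat -> xs (n i) = Fiter (N - n i) (xs N)).
    { intros i Hi; rewrite (inPhat_thread xs Hxs (N - n i) (n i)).
      specialize (hmax i Hi); fold N in hmax; do 2 f_equal; lia. }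
    split.
    + intros H; split; [exact (proj1 (Hxs N)) |]; intros i Hi; rewrite <- Hthread; auto.
    + intros [_ H] i Hi; rewrite Hthread; auto.
Qed.
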